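(* Fix an index $i$ and suppose its list is involved in $q_i$ good queries, each for an object present in the table. Let $\mathcal{A}^{\mathrm{ins}}_i$ be the algorithm's total RB cost for inserting the good objects of list $i$, and let $\mathcal{B}_i$ be the adversary's total RB cost for bad queries and bad insertions in list $i$. Then, for these $q_i$ queries, the algorithm's total RB cost and its total latency are each at most $$\mathcal{A}^{\mathrm{ins}}_i+\ell_i\big(q_i+\sqrt{2q_i\,\mathcal{B}_i}\big).$$
   Context: Model. A hash table has $t$ indices with chaining. The objects at an index form a list, new objects are appended at the tail, and $L_i$ denotes the current number of objects in the list at index $i$. The depth of an object is its position counted from the head of its list (the head has depth $1$). Algorithm \textsc{Depth Charge}: - Inserting at index $i$ costs the inserter an RB (resource-burning) cost of $L_i+1$ and has latency $1$. - Querying a present object at depth $\Delta$ costs $\Delta$, has latency $\Delta$, and then moves the object to the head of its list (move-to-front). - Querying an absent object costs $L_i$. - Deletions are handled like queries, except that the found object is removed. Good objects (inserted by clients) go to uniformly random indices; clients query only good objects. A Byzantine adversary inserts bad objects at indices of its choice, may query any object, and schedules all requests. $\ell_i$ is the maximum number of good objects ever present in the list at index $i$. *)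

(* Model of a single list (index i) of the Depth Charge hash table. *)
From mathcomp Require Import all_boot all_order all_algebra.
Set Implicit Arguments.
Unset Strict Implicit.
Unset Printing Implicit Defensive.

Definition obj := (nat * bool)%type.
Definition is_good (o : obj) : bool := o.2.

(* GIns n : a client inserts the good object (n,true)
   BIns n : the adversary inserts the bad object (n,false)
   GQry n : a client queries the good object (n,true)
   GDel n : a client deletes the good object (n,true)
   BQry o : the adversary queries an arbitrary object o
   BDel o : the adversary deletes an arbitrary object o *)
Inductive op : Type :=
| GIns of nat | BIns of nat | GQry of nat | GDel of nat | BQry of obj | BDel of obj.

Definition depth (s : seq obj) (o : obj) : nat := (index o s).+1.

Definition mtf (s : seq obj) (o : obj) : seq obj :=
  if o \in s then o :: rem o s else s.

Definition step (s : seq obj) (r : op) : seq obj :=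
  match r with
  | GIns n => rcons s (n, true)
  | BIns n => rcons s (n, false)
  | GQry n => mtf s (n, true)
  | GDel n => rem (n, true) s
  | BQry o => mtf s o
  | BDel o => rem o s
  end.

Definition qry_cost (s : seq obj) (o : obj) : nat :=
  if o \in s then depth s o else size s.

(* RB cost of a request, as paid by the party issuing it. *)
Definition rb_cost (s : seq obj) (r : op) : nat :=
  match r with
  | GIns _ | BIns _ => (size s).+1
  | GQry n | GDel n => qry_cost s (n, true)
  | BQry o | BDel o => qry_cost s o
  end.

Definition latency (s : seq obj) (r : op) : nat :=
  match r with
  | GIns _ | BIns _ => 1
  | GQry n | GDel n => depth s (n, true)
  | BQry o | BDel o => depth s o
  end.

Definition is_good_ins (r : op) : bool := if r is GIns _ then true else false.
Definition is_bad_op (r : op) : bool :=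
  match r with BIns _ | BQry _ | BDel _ => true | _ => false end.
Definition is_good_present_qry (s : seq obj) (r : op) : bool :=
  match r with GQry n | GDel n => (n, true) \in s | _ => false end.

Definition inserted (r : op) : option obj :=
  match r with GIns n => Some (n, true) | BIns n => Some (n, false) | _ => None end.

(* A trace is a sequence of requests, scheduled by the adversary, starting
   from the empty list. *)
Definition nth_op (ops : seq op) (k : nat) : op := nth (BQry (0, false)) ops k.
Definition state (ops : seq op) (k : nat) : seq obj := foldl step [::] (take k ops).

Definition A_ins (ops : seq op) : nat :=
  \sum_(k < size ops | is_good_ins (nth_op ops k)) rb_cost (state ops k) (nth_op ops k).
Definition B_adv (ops : seq op) : nat :=
  \sum_(k < size ops | is_bad_op (nth_op ops k)) rb_cost (state ops k) (nth_op ops k).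
Definition q_good (ops : seq op) : nat :=
  \sum_(k < size ops | is_good_present_qry (state ops k) (nth_op ops k)) 1.
Definition good_qry_cost (ops : seq op) : nat :=
  \sum_(k < size ops | is_good_present_qry (state ops k) (nth_op ops k))
     rb_cost (state ops k) (nth_op ops k).
Definition good_qry_latency (ops : seq op) : nat :=
  \sum_(k < size ops | is_good_present_qry (state ops k) (nth_op ops k))
     latency (state ops k) (nth_op ops k).
Definition ell (ops : seq op) : nat :=
  \max_(k < (size ops).+1) count is_good (state ops k).

From mathcomp Require Import all_boot all_order all_algebra.
From mathcomp Require Import zify lra.
Import GRing.Theory Num.Theory.

(* For a good object, let b be the number of bad objects ahead of it: a query
   for it costs at most ell + b.  Each good object n carries two credits: cI n,
   the bad objects already ahead of it on insertion (paid for by the insertion,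
   whose cost is the length of the list) and reset to 0 when n moves to the
   front, and cB n, the RB cost the adversary has paid since.  The invariant
   (b - cI n)^2 <= 2 cB n survives a bad move-to-front: a bad object at depth d
   overtaking n has b < d bad objects ahead of n, so (b+1)^2 <= b^2 + 2d, and
   charging d to each of the at most ell good objects costs ell d.  Hence the
   excesses x_j of the q good queries over ell + cI satisfy
   sum x_j^2 <= 2 ell B, and by Cauchy-Schwarz
   sum x_j <= sqrt (2 q ell B) <= ell sqrt (2 q B). *)

Definition bad_ahead (s : seq obj) (o : obj) : nat :=
  count (predC is_good) (take (index o s) s).

Lemma count_take_index_rem (T : eqType) (p : pred T) (s : seq T) (o y : T) : o != y ->
  count p (take (index o (rem y s)) (rem y s)) + (p y && (y \in take (index o s) s))
  <= count p (take (index o s) s).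
Proof.
move=> oy; elim: s => [|x s IH] /=; first by rewrite andbF.
have [->|xy] := eqVneq x y.
  by rewrite eq_sym in oy; rewrite (negbTE oy) /= inE eqxx andbT addnC.
have [->|xo] := eqVneq x o.
  by rewrite /= eqxx in_nil andbF.
by rewrite /= (negbTE xo) in_cons eq_sym (negbTE xy) -addnA leq_add2l.
Qed.

Lemma bad_ahead_rem (s : seq obj) (o y : obj) :
  o != y -> bad_ahead (rem y s) o <= bad_ahead s o.
Proof.
by move/(count_take_index_rem _ (predC is_good) s); apply: leq_trans; apply: leq_addr.
Qed.

Lemma bad_ahead_cons (s : seq obj) (o y : obj) :
  y != o -> bad_ahead (y :: s) o = ~~ is_good y + bad_ahead s o.
Proof. by move=> yo; rewrite /bad_ahead /= (negbTE yo). Qed.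

Lemma bad_ahead_head (s : seq obj) (o : obj) : bad_ahead (o :: s) o = 0.
Proof. by rewrite /bad_ahead /= eqxx. Qed.

Lemma bad_ahead_rcons (s : seq obj) (o x : obj) :
  o \in s -> bad_ahead (rcons s x) o = bad_ahead s o.
Proof. by move=> os; rewrite /bad_ahead -cats1 index_cat os take_cat index_mem os. Qed.

Lemma bad_ahead_rcons_new (s : seq obj) (x : obj) : x \notin s ->
  bad_ahead (rcons s x) x = count (predC is_good) s.
Proof.
move=> xs; rewrite /bad_ahead -cats1 index_cat (negbTE xs) take_cat /= eqxx addn0.
by rewrite ltnn subnn take0 cats0.
Qed.

Lemma bad_ahead_le_index (s : seq obj) (o : obj) : bad_ahead s o <= index o s.
Proof. by apply: leq_trans (count_size _ _) _; rewrite size_take_min geq_minl. Qed.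

Lemma depth_le_count_good (s : seq obj) (o : obj) : o \in s -> is_good o ->
  depth s o <= count is_good s + bad_ahead s o.
Proof.
move=> os go; rewrite /depth /bad_ahead.
have hs : index o s < size s by rewrite index_mem.
rewrite -{2}(cat_take_drop (index o s) s) count_cat (drop_nth o hs) nth_index //= go.
have := count_predC is_good (take (index o s) s).
rewrite size_takel ?(ltnW hs) //=; lia.
Qed.

Lemma bad_ahead_rem_ahead (s : seq obj) (o y : obj) :
  o != y -> y \in s -> ~~ is_good y -> index y s < index o s ->
  (bad_ahead (rem y s) o).+1 <= bad_ahead s o.
Proof.
move=> oy ys by_ lt_yo; have := count_take_index_rem _ (predC is_good) s o y oy.
by rewrite /= by_ in_take // lt_yo addn1.
Qed.

Definition good_sum (s : seq obj) (c : nat -> nat) : nat :=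
  \sum_(x <- s | is_good x) c x.1.

Definition set_credit (c : nat -> nat) (n v : nat) : nat -> nat :=
  fun m => if m == n then v else c m.

Lemma good_sum_cons (y : obj) (s : seq obj) (c : nat -> nat) :
  good_sum (y :: s) c = (if is_good y then c y.1 else 0) + good_sum s c.
Proof. by rewrite /good_sum big_cons; case: ifP. Qed.

Lemma good_sum_rcons (s : seq obj) (y : obj) (c : nat -> nat) :
  good_sum (rcons s y) c = good_sum s c + (if is_good y then c y.1 else 0).
Proof.
by rewrite /good_sum -cats1 big_cat big_cons big_nil /=; case: ifP; rewrite ?addn0.
Qed.

Lemma good_sum_perm (s t : seq obj) (c : nat -> nat) :
  perm_eq s t -> good_sum s c = good_sum t c.
Proof. exact: perm_big. Qed.

Lemma good_sum_rem (s : seq obj) (y : obj) (c : nat -> nat) : y \in s ->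
  good_sum s c = (if is_good y then c y.1 else 0) + good_sum (rem y s) c.
Proof. by move/perm_to_rem/good_sum_perm->; rewrite good_sum_cons. Qed.

Lemma good_sum_rem_le (s : seq obj) (y : obj) (c : nat -> nat) :
  good_sum (rem y s) c <= good_sum s c.
Proof.
have [ys|ys] := boolP (y \in s); last by rewrite rem_id.
by rewrite [leqRHS](good_sum_rem s y c ys) leq_addl.
Qed.

Lemma good_sum_set_credit (s : seq obj) (c : nat -> nat) (n v : nat) :
  (n, true) \notin s -> good_sum s (set_credit c n v) = good_sum s c.
Proof.
move=> ns; rewrite /good_sum big_seq_cond [RHS]big_seq_cond.
apply: eq_bigr => -[m b] /andP[ms gb].
rewrite /set_credit /=; have [mn|//] := eqVneq m n.
by case: b gb ms => // _ ms; rewrite -mn ms in ns.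
Qed.

Lemma good_sum_addn (s : seq obj) (c : nat -> nat) (d : nat) :
  good_sum s (fun m => c m + d) = good_sum s c + d * count is_good s.
Proof. by rewrite /good_sum big_split /= big_const_seq iter_addn_0. Qed.

Definition credit_inv (s : seq obj) (cI cB : nat -> nat) : Prop :=
  uniq s /\ forall n, (n, true) \in s -> (bad_ahead s (n, true) - cI n) ^ 2 <= 2 * cB n.

Lemma sqr_subSn_le (b g p d : nat) :
  b - g < d -> (b - g) ^ 2 <= 2 * p -> (b.+1 - g) ^ 2 <= 2 * (p + d).
Proof.
move=> lt_d le_p; apply: (@leq_trans ((b - g).+1 ^ 2)); first by rewrite leq_sqr; lia.
by move: lt_d le_p; move: (b - g) => a; nia.
Qed.

Lemma credit_inv_rem (s : seq obj) (y : obj) (cI cB : nat -> nat) :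
  credit_inv s cI cB -> credit_inv (rem y s) cI cB.
Proof.
move=> [us inv]; split=> [|n ns]; first exact: rem_uniq.
have ny : (n, true) != y by apply: contraTneq ns => ->; rewrite mem_rem_uniqF.
apply: leq_trans (inv n (mem_rem ns)).
by rewrite leq_sqr leq_sub2r // bad_ahead_rem.
Qed.

Lemma credit_inv_mtf_good (s : seq obj) (y : obj) (cI cB cI' cB' : nat -> nat) :
  credit_inv s cI cB -> y \in s -> is_good y ->
  (forall m, (m, true) != y -> cI' m = cI m /\ cB' m = cB m) ->
  credit_inv (y :: rem y s) cI' cB'.
Proof.
move=> [us inv] ys gy same; split; first by rewrite /= mem_rem_uniqF // rem_uniq.
move=> n; rewrite in_cons; have [<- _|ny /= ns] := eqVneq (n, true) y.
  by rewrite bad_ahead_head.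
have [-> ->] := same n ny; apply: leq_trans (inv n (mem_rem ns)).
by rewrite leq_sqr leq_sub2r // bad_ahead_cons 1?eq_sym // gy bad_ahead_rem.
Qed.

Lemma credit_inv_mtf_bad (s : seq obj) (y : obj) (cI cB : nat -> nat) :
  credit_inv s cI cB -> y \in s -> ~~ is_good y ->
  credit_inv (y :: rem y s) cI (fun m => cB m + depth s y).
Proof.
move=> [us inv] ys by_; split; first by rewrite /= mem_rem_uniqF // rem_uniq.
move=> n; rewrite in_cons; have [e|ny /= /mem_rem ns] := eqVneq (n, true) y.
  by move: by_; rewrite -e.
rewrite bad_ahead_cons 1?eq_sym // by_ add1n.
have [lt_yn|le_ny] := ltnP (index y s) (index (n, true) s).
  apply: leq_trans (leq_trans _ (inv n ns)) _; last by rewrite leq_mul2l leq_addr.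
  by rewrite leq_sqr leq_sub2r // bad_ahead_rem_ahead.
have lt_depth : bad_ahead s (n, true) - cI n < depth s y.
  by rewrite ltnS (leq_trans (leq_subr _ _)) // (leq_trans (bad_ahead_le_index _ _)).
apply: leq_trans (sqr_subSn_le _ _ _ _ lt_depth (inv n ns)).
by rewrite leq_sqr leq_sub2r // ltnS bad_ahead_rem.
Qed.

Lemma credit_inv_rcons_bad (s : seq obj) (x : obj) (cI cB : nat -> nat) :
  credit_inv s cI cB -> x \notin s -> ~~ is_good x -> credit_inv (rcons s x) cI cB.
Proof.
move=> [us inv] xs bx; split=> [|n]; first by rewrite rcons_uniq xs.
rewrite mem_rcons in_cons; have [e|nx /= ns] := eqVneq (n, true) x.
  by move: bx; rewrite -e.
by rewrite bad_ahead_rcons // inv.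
Qed.

Lemma credit_inv_rcons_good (s : seq obj) (n : nat) (cI cB : nat -> nat) :
  credit_inv s cI cB -> (n, true) \notin s ->
  credit_inv (rcons s (n, true))
    (set_credit cI n (count (predC is_good) s)) (set_credit cB n 0).
Proof.
move=> [us inv] ns; split=> [|m]; first by rewrite rcons_uniq ns.
rewrite /set_credit mem_rcons in_cons; have [->|mn] := eqVneq m n.
  by rewrite bad_ahead_rcons_new // subnn.
by rewrite xpair_eqE (negbTE mn) /= => ms; rewrite bad_ahead_rcons // inv.
Qed.

(* [t] records the excess of a good query over [L + cI n]; its square is paid
   by [cB n]. *)
Definition amortized_step (L : nat) (s : seq obj) (r : op) (cI cB : nat -> nat) : Prop :=
  exists cI' cB' (t : seq nat),
  [/\ credit_inv (step s r) cI' cB',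
      size t = is_good_present_qry s r,
      (if is_good_present_qry s r then rb_cost s r else 0) + good_sum (step s r) cI'
        <= (if is_good_ins r then rb_cost s r else 0) + good_sum s cI
           + L * is_good_present_qry s r + sumn t &
      sumn (map (fun x => x ^ 2) t) + 2 * good_sum (step s r) cB'
        <= 2 * good_sum s cB + 2 * L * (if is_bad_op r then rb_cost s r else 0)].

Section AmortizedStep.

Variables (L : nat) (s : seq obj) (cI cB : nat -> nat).
Hypotheses (inv : credit_inv s cI cB) (count_good_le : count is_good s <= L).

Lemma amortized_GIns (n : nat) : (n, true) \notin s -> amortized_step L s (GIns n) cI cB.
Proof.
move=> ns; exists (set_credit cI n (count (predC is_good) s)), (set_credit cB n 0), [::].
rewrite /= !good_sum_rcons !good_sum_set_credit // /= /set_credit eqxx.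
split=> //; first exact: credit_inv_rcons_good.
  by have := count_size (predC is_good) s; lia.
by lia.
Qed.

Lemma amortized_BIns (n : nat) : (n, false) \notin s -> amortized_step L s (BIns n) cI cB.
Proof.
move=> ns; exists cI, cB, [::]; rewrite /= !good_sum_rcons /=.
by split=> //; [exact: credit_inv_rcons_bad | lia | lia].
Qed.

Lemma depth_le_credit (n : nat) : (n, true) \in s ->
  depth s (n, true) <= L + cI n + (bad_ahead s (n, true) - cI n).
Proof. by move=> ns; have := depth_le_count_good _ _ ns erefl; lia. Qed.

Lemma amortized_GQry (n : nat) : amortized_step L s (GQry n) cI cB.
Proof.
have [ns|ns] := boolP ((n, true) \in s); last first.
  by exists cI, cB, [::]; rewrite /= /mtf (negbTE ns); split=> //=; lia.
have nr : (n, true) \notin rem (n, true) s by rewrite mem_rem_uniqF // inv.1.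
exists (set_credit cI n 0), (set_credit cB n 0), [:: bad_ahead s (n, true) - cI n].
rewrite /= /mtf /qry_cost ns; split=> //.
- apply: (credit_inv_mtf_good _ _ cI cB) => // m.
  by rewrite /set_credit xpair_eqE andbT => /negbTE ->.
- rewrite good_sum_cons good_sum_set_credit // /= /set_credit eqxx.
  by rewrite (good_sum_rem s (n, true) cI ns) /=; have := depth_le_credit _ ns; lia.
- rewrite good_sum_cons good_sum_set_credit // /= /set_credit eqxx.
  rewrite (good_sum_rem s (n, true) cB ns) /=.
  by have := inv.2 n ns; set x := (_ - _) ^ 2; lia.
Qed.

Lemma amortized_GDel (n : nat) : amortized_step L s (GDel n) cI cB.
Proof.
have [ns|ns] := boolP ((n, true) \in s); last first.
  by exists cI, cB, [::]; rewrite /= rem_id //; split=> //=; rewrite ?(negbTE ns); lia.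
exists cI, cB, [:: bad_ahead s (n, true) - cI n].
rewrite /= /qry_cost ns; split=> //; first exact: credit_inv_rem.
  by rewrite (good_sum_rem s (n, true) cI ns) /=; have := depth_le_credit _ ns; lia.
rewrite (good_sum_rem s (n, true) cB ns) /=.
by have := inv.2 n ns; set x := (_ - _) ^ 2; lia.
Qed.

Lemma amortized_BQry (y : obj) : amortized_step L s (BQry y) cI cB.
Proof.
have [ys|ys] := boolP (y \in s); last first.
  by exists cI, cB, [::]; rewrite /= /mtf (negbTE ys); split=> //=; lia.
have pe : perm_eq (y :: rem y s) s by rewrite perm_sym perm_to_rem.
rewrite /amortized_step /= /mtf /qry_cost ys.
have [gy|by_] := boolP (is_good y).
  exists cI, cB, [::]; rewrite !(good_sum_perm _ _ _ pe); split=> //=; try lia.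
  exact: (credit_inv_mtf_good _ _ cI cB).
exists cI, (fun m => cB m + depth s y), [::].
rewrite !(good_sum_perm _ _ _ pe) good_sum_addn; split=> //=.
- exact: credit_inv_mtf_bad.
- by lia.
by have := leq_mul (leqnn (depth s y)) count_good_le; lia.
Qed.

Lemma amortized_BDel (y : obj) : amortized_step L s (BDel y) cI cB.
Proof.
exists cI, cB, [::]; split=> //=; first exact: credit_inv_rem.
  by have := good_sum_rem_le s y cI; lia.
by have := good_sum_rem_le s y cB; lia.
Qed.

Lemma amortized_step_fresh (r : op) :
  (forall x, inserted r = Some x -> x \notin s) -> amortized_step L s r cI cB.
Proof.
case: r => [n|n|n|n|y|y] fresh.
- exact: amortized_GIns (fresh _ erefl).
- exact: amortized_BIns (fresh _ erefl).
- exact: amortized_GQry.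
- exact: amortized_GDel.
- exact: amortized_BQry.
- exact: amortized_BDel.
Qed.

End AmortizedStep.

Definition run (ops : seq op) : seq obj := foldl step [::] ops.

Lemma run_rcons (ops : seq op) (r : op) : run (rcons ops r) = step (run ops) r.
Proof. exact: foldl_rcons. Qed.

Lemma state_rcons (ops : seq op) (r : op) (k : nat) :
  k <= size ops -> state (rcons ops r) k = state ops k.
Proof. by move=> le_k; rewrite /state -cats1 takel_cat. Qed.

Lemma state_size (ops : seq op) : state ops (size ops) = run ops.
Proof. by rewrite /state take_size. Qed.

Definition trace_sum (P : seq obj -> op -> bool) (F : seq obj -> op -> nat)
    (ops : seq op) : nat :=
  \sum_(k < size ops | P (state ops k) (nth_op ops k)) F (state ops k) (nth_op ops k).

Lemma trace_sum_rcons (P : seq obj -> op -> bool) (F : seq obj -> op -> nat)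
    (ops : seq op) (r : op) :
  trace_sum P F (rcons ops r)
  = trace_sum P F ops + (if P (run ops) r then F (run ops) r else 0).
Proof.
rewrite /trace_sum size_rcons big_mkcond big_ord_recr /= [in RHS]big_mkcond.
rewrite state_rcons // state_size /nth_op nth_rcons ltnn eqxx.
congr (_ + _); apply: eq_bigr => k _.
by rewrite state_rcons 1?ltnW // nth_rcons ltn_ord.
Qed.

Lemma A_ins_rcons (ops : seq op) (r : op) :
  A_ins (rcons ops r) = A_ins ops + (if is_good_ins r then rb_cost (run ops) r else 0).
Proof. exact: (trace_sum_rcons (fun _ r => is_good_ins r) rb_cost). Qed.

Lemma B_adv_rcons (ops : seq op) (r : op) :
  B_adv (rcons ops r) = B_adv ops + (if is_bad_op r then rb_cost (run ops) r else 0).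
Proof. exact: (trace_sum_rcons (fun _ r => is_bad_op r) rb_cost). Qed.

Lemma q_good_rcons (ops : seq op) (r : op) :
  q_good (rcons ops r) = q_good ops + is_good_present_qry (run ops) r.
Proof.
have := trace_sum_rcons is_good_present_qry (fun _ _ => 1) ops r.
by rewrite -[trace_sum _ _ _]/(q_good _) => ->; case: ifP.
Qed.

Lemma good_qry_cost_rcons (ops : seq op) (r : op) :
  good_qry_cost (rcons ops r) = good_qry_cost ops
    + (if is_good_present_qry (run ops) r then rb_cost (run ops) r else 0).
Proof. exact: (trace_sum_rcons is_good_present_qry rb_cost). Qed.

Lemma good_qry_latency_eq_cost (ops : seq op) : good_qry_latency ops = good_qry_cost ops.
Proof.
by apply: eq_bigr => k; case: (nth_op ops k) => //= [n|n] present;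
  rewrite /qry_cost present.
Qed.

Lemma mem_step (s : seq obj) (r : op) (x : obj) :
  x \in step s r -> x \in s \/ inserted r = Some x.
Proof.
case: r => [n|n|n|n|y|y] /=; rewrite ?mem_rcons ?in_cons /mtf.
- by case/orP=> [/eqP ->|]; [right|left].
- by case/orP=> [/eqP ->|]; [right|left].
- by case: ifP => [yin|_]; rewrite ?in_cons; [case/orP=> [/eqP -> //|/mem_rem]|]; left.
- by move/mem_rem; left.
- by case: ifP => [yin|_]; rewrite ?in_cons; [case/orP=> [/eqP -> //|/mem_rem]|]; left.
- by move/mem_rem; left.
Qed.

Lemma run_sub_inserted (ops : seq op) : {subset run ops <= pmap inserted ops}.
Proof.
elim/last_ind: ops => [//|ops r IH] x; rewrite run_rcons -cats1 pmap_cat mem_cat.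
by case/mem_step=> [/IH ->//|e]; rewrite /= e mem_seq1 eqxx orbT.
Qed.

Lemma inserted_fresh (ops : seq op) (r : op) (x : obj) :
  uniq (pmap inserted (rcons ops r)) -> inserted r = Some x -> x \notin run ops.
Proof.
rewrite -cats1 pmap_cat cat_uniq /= => /and3P[_ + _] e.
by rewrite e /= orbF; apply: contra => /run_sub_inserted.
Qed.

Lemma trace_credits (L : nat) (ops : seq op) :
  uniq (pmap inserted ops) ->
  (forall k, k <= size ops -> count is_good (state ops k) <= L) ->
  exists cI cB (f : seq nat),
  [/\ credit_inv (run ops) cI cB,
      size f = q_good ops,
      good_qry_cost ops + good_sum (run ops) cI <= A_ins ops + L * q_good ops + sumn f &
      sumn (map (fun x => x ^ 2) f) + 2 * good_sum (run ops) cB <= 2 * L * B_adv ops].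
Proof.
elim/last_ind: ops => [|ops r IH] uniq_ins count_le.
  exists (fun _ => 0), (fun _ => 0), [::].
  rewrite /good_qry_cost /A_ins /B_adv /q_good /= !big_ord0 /good_sum big_nil muln0.
  by split=> //; split.
have uniq_ins' : uniq (pmap inserted ops).
  by move: uniq_ins; rewrite -cats1 pmap_cat cat_uniq => /andP[].
have count_le' k : k <= size ops -> count is_good (state ops k) <= L.
  by move=> le_k; rewrite -(state_rcons ops r k le_k) count_le // size_rcons ltnW.
have [cI [cB [f [inv card cost bad]]]] := IH uniq_ins' count_le'.
have good_le : count is_good (run ops) <= L.
  by rewrite -state_size -(state_rcons ops r _ (leqnn _)) count_le // size_rcons.
have fresh x : inserted r = Some x -> x \notin run ops := inserted_fresh ops r x uniq_ins.
have [cI' [cB' [t [inv' card' cost' bad']]]] :=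
  amortized_step_fresh L (run ops) cI cB inv good_le r fresh.
exists cI', cB', (f ++ t); rewrite run_rcons A_ins_rcons B_adv_rcons q_good_rcons.
rewrite good_qry_cost_rcons size_cat map_cat !sumn_cat; split=> //; lia.
Qed.

Lemma sqr_sumn_le (f : seq nat) : sumn f ^ 2 <= size f * sumn (map (fun x => x ^ 2) f).
Proof.
elim: f => [//|a f] /=; rewrite -!mulnn.
set S := sumn f; set Q := sumn _; case: (size f) => [|k] IH.
  have -> : S = 0 by move: IH; rewrite mul0n leqn0 muln_eq0 orbb => /eqP.
  by rewrite addn0 mul1n leq_addr.
have := (nat_Cauchy (k.+1 * a) S).1; rewrite -!mulnn; nia.
Qed.

Lemma sqr_sumn_le_mul (f : seq nat) (L B : nat) :
  sumn (map (fun x => x ^ 2) f) <= 2 * L * B -> sumn f ^ 2 <= L ^ 2 * (2 * size f * B).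
Proof.
move=> le_sq; apply: leq_trans (sqr_sumn_le f) _; rewrite -mulnn.
apply: leq_trans (leq_mul (leqnn _) le_sq) _.
by case: L {le_sq} => [|l]; nia.
Qed.

Lemma count_good_le_ell (ops : seq op) (k : nat) :
  k <= size ops -> count is_good (state ops k) <= ell ops.
Proof.
move=> le_k; rewrite /ell.
exact: (@leq_bigmax _ (fun i : 'I_(size ops).+1 => count is_good (state ops i))
                      (Ordinal (le_k : k < (size ops).+1))).
Qed.

Local Open Scope ring_scope.

Lemma ler_nat_mul_sqrt (R : rcfType) (a b c : nat) :
  (a ^ 2 <= b ^ 2 * c)%N -> a%:R <= b%:R * Num.sqrt (c%:R : R).
Proof.
move=> le_abc; rewrite -ler_sqr ?nnegrE ?mulr_ge0 ?sqrtr_ge0 //.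
by rewrite exprMn sqr_sqrtr // -!natrX -natrM ler_nat.
Qed.

Theorem lemma6 (R : rcfType) (ops : seq op) :
  uniq (pmap inserted ops) ->
  let bound : R := (A_ins ops)%:R + (ell ops)%:R *
      ((q_good ops)%:R + Num.sqrt (2 * (q_good ops)%:R * (B_adv ops)%:R)) in
  (good_qry_cost ops)%:R <= bound /\ (good_qry_latency ops)%:R <= bound.
Proof.
move=> uniq_ins bound.
have [cI [cB [f [_ card cost bad]]]] :=
  trace_credits (ell ops) ops uniq_ins (count_good_le_ell ops).
have := sqr_sumn_le_mul f (ell ops) (B_adv ops) (leq_trans (leq_addr _ _) bad).
rewrite card => /(ler_nat_mul_sqrt R); rewrite !natrM => excess_le.
have cost_le : (good_qry_cost ops)%:R
    <= (A_ins ops)%:R + (ell ops)%:R * (q_good ops)%:R + (sumn f)%:R :> R.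
  by rewrite -!natrM -!natrD ler_nat; lia.
suff le_bound : (good_qry_cost ops)%:R <= bound by rewrite good_qry_latency_eq_cost.
rewrite /bound; lra.
Qed.
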